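(* In the MDP fixed-point setting below with $\delta=1$, let $\mathcal{Z}_i=\{e^1,\dots,e^M\}$ (standard basis vectors of $\mathbb{R}^M$) for every $i$ and $k_i(z_i)=-C-\sum_j z_{ij}|i-j|$ with $C>0$. Then (H4) holds. Moreover, suppose there is a state $r$ with $1\in\mathcal{D}_r$ and $c_r(w_r)<-C$ for all $w_r\in\mathcal{W}_r$. Then, starting policy iteration from $v^0=0$, every admissible choice $P^1=(w^1,z^1,\psi^1)$ in the first step satisfies $z^1_r=e^r$ and $\psi^1_r=1$, row $r$ of $A(P^1)$ is identically zero, and hence $A(P^1)$ is singular (so $v^1$ is undefined).
   Context: MDP fixed-point setting: $\rho>0$; $\mathcal{P}=\prod_i(\mathcal{W}_i\times\mathcal{Z}_i\times\mathcal{D}_i)$ with $\mathcal{D}_i$ nonempty subsets of $\{0,1\}$ and $\mathcal{W}_i,\mathcal{Z}_i$ nonempty sets of probability vectors in $\mathbb{R}^M$; $c_i:\mathcal{W}_i\to\mathbb{R}$, $k_i:\mathcal{Z}_i\to\mathbb{R}$. For $P=(w,z,\psi)$: $[L(w)]_{ij}=w_{ij}/(1+\rho)$, $[B(z)]_{ij}=z_{ij}$, $[c(w)]_i=c_i(w_i)$, $[k(z)]_i=k_i(z_i)$, $\Psi=\operatorname{diag}(\psi)$, $A(P)=(I-\Psi)(I-L(w))+\delta\Psi(I-B(z))$, $b(P)=(I-\Psi)c(w)+\delta\Psi k(z)$. Order/suprema componentwise; $\mathbb{B}x=\sup_{z}\{B(z)x+k(z)\}$. Policy iteration: given $v^0$,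 for $\ell\ge1$ choose $P^\ell$ with $-A(P^\ell)v^{\ell-1}+b(P^\ell)=\sup_P\{-A(P)v^{\ell-1}+b(P)\}$ and solve $A(P^\ell)v^\ell=b(P^\ell)$. (H4): for each solution $v$ of $\sup_P\{-A(P)v+b(P)\}=0$ and each $i$ there exist integers $0\le n(i)<m(i)$ with $[\mathbb{B}^{m(i)}v]_i<[\mathbb{B}^{n(i)}v]_i$. *)

(* Real numbers are modelled by an arbitrary realFieldType R
   (the statement is purely order-algebraic, so this is a generalization of R = reals). *)
From HB Require Import structures.
From mathcomp Require Import all_boot all_order all_algebra.
Set Implicit Arguments. Unset Strict Implicit. Unset Printing Implicit Defensive.
Import Order.TTheory GRing.Theory Num.Theory.
Local Open Scope ring_scope.

(* States are 'I_M.  A policy P = (w, z, psi): w, z : 'M_M whose i-th rows are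
   w_i, z_i; psi : 'I_M -> bool (false = 0, true = 1). *)

Definition prob_vec (R : realFieldType) (M : nat) (v : 'rV[R]_M) : Prop :=
  (forall j, 0 <= v 0 j) /\ \sum_(j < M) v 0 j = 1.

Definition Lmx (R : realFieldType) (M : nat) (rho : R) (w : 'M[R]_M) : 'M[R]_M :=
  (1 + rho)^-1 *: w.
Definition Bmx (R : realFieldType) (M : nat) (z : 'M[R]_M) : 'M[R]_M := z.
Definition cvec (R : realFieldType) (M : nat) (c : 'I_M -> 'rV[R]_M -> R)
  (w : 'M[R]_M) : 'cV[R]_M := \col_i c i (row i w).
Definition kvec (R : realFieldType) (M : nat) (k : 'I_M -> 'rV[R]_M -> R)
  (z : 'M[R]_M) : 'cV[R]_M := \col_i k i (row i z).
Definition Psi (R : realFieldType) (M : nat) (psi : 'I_M -> bool) : 'M[R]_M :=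
  diag_mx (\row_i ((psi i)%:R : R)).

Definition Amx (R : realFieldType) (M : nat) (rho delta : R)
  (w z : 'M[R]_M) (psi : 'I_M -> bool) : 'M[R]_M :=
  (1%:M - @Psi R M psi) *m (1%:M - Lmx rho w) + delta *: (@Psi R M psi *m (1%:M - Bmx z)).

Definition bvec (R : realFieldType) (M : nat) (delta : R)
  (c k : 'I_M -> 'rV[R]_M -> R) (w z : 'M[R]_M) (psi : 'I_M -> bool) : 'cV[R]_M :=
  (1%:M - @Psi R M psi) *m cvec c w + delta *: (@Psi R M psi *m kvec k z).

Definition admissible (R : realFieldType) (M : nat)
  (W Z : 'I_M -> 'rV[R]_M -> Prop) (D : 'I_M -> bool -> Prop)
  (w z : 'M[R]_M) (psi : 'I_M -> bool) : Prop :=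
  forall i, W i (row i w) /\ Z i (row i z) /\ D i (psi i).

Definition Fval (R : realFieldType) (M : nat) (rho delta : R)
  (c k : 'I_M -> 'rV[R]_M -> R) (w z : 'M[R]_M) (psi : 'I_M -> bool)
  (v : 'cV[R]_M) : 'cV[R]_M :=
  - (Amx rho delta w z psi *m v) + bvec delta c k w z psi.

Definition is_supR (R : realFieldType) (S : R -> Prop) (s : R) : Prop :=
  (forall x, S x -> x <= s) /\ (forall y, (forall x, S x -> x <= y) -> s <= y).

Definition solves_HJB (R : realFieldType) (M : nat) (rho delta : R)
  (W Z : 'I_M -> 'rV[R]_M -> Prop) (D : 'I_M -> bool -> Prop)
  (c k : 'I_M -> 'rV[R]_M -> R) (v : 'cV[R]_M) : Prop :=
  forall i, is_supR (fun t => exists w z psi,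
      admissible W Z D w z psi /\ t = Fval rho delta c k w z psi v i 0) 0.

Definition Bellman_step (R : realFieldType) (M : nat)
  (Z : 'I_M -> 'rV[R]_M -> Prop) (k : 'I_M -> 'rV[R]_M -> R)
  (x y : 'cV[R]_M) : Prop :=
  forall i, is_supR (fun t => exists z : 'M[R]_M,
      (forall j, Z j (row j z)) /\ t = (Bmx z *m x + kvec k z) i 0) (y i 0).

(* The iterates are
   described as sequences u with u 0 = v and u (n+1) = BB (u n). *)
Definition H4 (R : realFieldType) (M : nat) (rho delta : R)
  (W Z : 'I_M -> 'rV[R]_M -> Prop) (D : 'I_M -> bool -> Prop)
  (c k : 'I_M -> 'rV[R]_M -> R) : Prop :=
  forall v : 'cV[R]_M, solves_HJB rho delta W Z D c k v ->
    (exists u : nat -> 'cV[R]_M,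
        u 0%N = v /\ forall n, Bellman_step Z k (u n) (u n.+1)) /\
    (forall u : nat -> 'cV[R]_M, u 0%N = v ->
        (forall n, Bellman_step Z k (u n) (u n.+1)) ->
        forall i, exists n m : nat, (n < m)%N /\ u m i 0 < u n i 0).

Definition PI_choice (R : realFieldType) (M : nat) (rho delta : R)
  (W Z : 'I_M -> 'rV[R]_M -> Prop) (D : 'I_M -> bool -> Prop)
  (c k : 'I_M -> 'rV[R]_M -> R) (v : 'cV[R]_M)
  (w1 z1 : 'M[R]_M) (psi1 : 'I_M -> bool) : Prop :=
  admissible W Z D w1 z1 psi1 /\
  forall w z psi, admissible W Z D w z psi ->
    forall i, Fval rho delta c k w z psi v i 0 <= Fval rho delta c k w1 z1 psi1 v i 0.

Definition Zbasis (R : realFieldType) (M : nat) (i : 'I_M) (v : 'rV[R]_M) : Prop :=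
  exists j : 'I_M, v = delta_mx 0 j.

Definition kdist (R : realFieldType) (M : nat) (C : R) (i : 'I_M) (v : 'rV[R]_M) : R :=
  - C - \sum_(j < M) v 0 j * `|(i : nat)%:R - (j : nat)%:R : R|.

(* With the unit-vector controls, the Bellman operator reads
   [BB x]_i = max_j (x_j - C - |i - j|).  Any image y = BB x is 1-Lipschitz in
   the state (the triangle inequality for |i - j|), so one more application
   gives [BB y]_i <= y_i - C < y_i: the iterates strictly decrease from the first
   step on, whatever v is, and (H4) holds with n = 1, m = 2.
   At v = 0 the value of a policy at state r is k_r(z_r) if it stops there and
   c_r(w_r) < -C otherwise.  Stopping with z_r = e^r achieves -C, so every
   maximising policy stops at r with a z_r = e^j satisfying -C - |r - j| >= -C,
   i.e. z_r = e^r; then row r of A(P) is psi_r (e^r - z_r) = 0. *)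
From mathcomp Require Import all_boot all_order all_algebra.
From mathcomp Require Import ring lra.
Set Implicit Arguments.
Unset Strict Implicit.
Unset Printing Implicit Defensive.
Import Order.TTheory GRing.Theory Num.Theory.
Local Open Scope ring_scope.

Section BellmanOperator.
Variables (R : realFieldType) (M : nat) (C : R).

Definition state_dist (i j : 'I_M) : R := `|(i : nat)%:R - (j : nat)%:R|.

Lemma state_distxx i : state_dist i i = 0.
Proof. by rewrite /state_dist subrr normr0. Qed.

Lemma state_dist_triangle i j l :
  state_dist i l <= state_dist i j + state_dist j l.
Proof. exact: ler_distD. Qed.

Lemma state_dist_le0 i j : state_dist i j <= 0 -> i = j.
Proof.
rewrite /state_dist normr_le0 subr_eq0 eqr_nat => /eqP; exact: val_inj.
Qed.

Lemma kdist_delta i j : kdist C i (delta_mx 0 j) = - C - state_dist i j.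
Proof.
rewrite /kdist (bigD1 j) //= big1 ?addr0; first by rewrite mxE !eqxx mul1r.
by move=> l /negbTE ljF; rewrite mxE eqxx ljF mul0r.
Qed.

Lemma mulmx_row_delta (z : 'M[R]_M) (x : 'cV[R]_M) i j :
  row i z = delta_mx 0 j -> (z *m x) i 0 = x j 0.
Proof.
move=> zi; have -> : (z *m x) i 0 = row i (z *m x) 0 0 by rewrite [RHS]mxE.
by rewrite row_mul zi -rowE mxE.
Qed.

Lemma Bellman_setE (x : 'cV[R]_M) i t :
  (exists z : 'M[R]_M, (forall j, Zbasis j (row j z)) /\
     t = (Bmx z *m x + kvec (kdist C) z) i 0) <->
  exists j, t = x j 0 - C - state_dist i j.
Proof.
have valE z j : row i z = delta_mx 0 j ->
    (Bmx z *m x + kvec (kdist C) z) i 0 = x j 0 - C - state_dist i j.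
  by move=> zi; rewrite mxE (mulmx_row_delta x zi) mxE zi kdist_delta; ring.
split=> [[z [zB ->]] | [j ->]].
  by have [j zi] := zB i; exists j; exact: valE.
pose zj : 'M[R]_M := \matrix_(a, b) (b == j)%:R.
have zjE a : row a zj = delta_mx 0 j by apply/rowP => b; rewrite !mxE.
by exists zj; split=> [a | ]; [exists j | rewrite (valE _ j)].
Qed.

Lemma Bellman_step_ge x y i j :
  Bellman_step (@Zbasis R M) (kdist C) x y -> x j 0 - C - state_dist i j <= y i 0.
Proof. by move=> /(_ i) [ub _]; apply: ub; apply/Bellman_setE; exists j. Qed.

Lemma Bellman_step_le x y i t :
  Bellman_step (@Zbasis R M) (kdist C) x y ->
  (forall j, x j 0 - C - state_dist i j <= t) -> y i 0 <= t.
Proof.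
by move=> /(_ i) [_ lub] xt; apply: lub => _ /Bellman_setE [j ->].
Qed.

Definition Bellman_argmax (x : 'cV[R]_M) : 'cV[R]_M :=
  \col_i (let j := Order.arg_max i xpredT (fun j => x j 0 - C - state_dist i j) in
          x j 0 - C - state_dist i j).

Lemma Bellman_step_argmax x :
  Bellman_step (@Zbasis R M) (kdist C) x (Bellman_argmax x).
Proof.
move=> i; rewrite mxE.
case: arg_maxP => // j _ jmax; split=> [_ /Bellman_setE [l ->] | t ub].
  exact: jmax.
by apply: ub; apply/Bellman_setE; exists j.
Qed.

Lemma Bellman_step_lipschitz x y i j :
  Bellman_step (@Zbasis R M) (kdist C) x y -> y j 0 <= y i 0 + state_dist i j.
Proof.
move=> xy; apply: (Bellman_step_le xy) => l.
have := Bellman_step_ge i l xy; have := state_dist_triangle i j l; lra.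
Qed.

Lemma Bellman_step2_decrease x y y' i :
  Bellman_step (@Zbasis R M) (kdist C) x y ->
  Bellman_step (@Zbasis R M) (kdist C) y y' -> y' i 0 <= y i 0 - C.
Proof.
move=> xy yy'; apply: (Bellman_step_le yy') => j.
have := Bellman_step_lipschitz i j xy; lra.
Qed.

Lemma H4_Zbasis_kdist rho delta W D c :
  0 < C -> H4 rho delta W (@Zbasis R M) D c (kdist C).
Proof.
move=> C_gt0 v _; split.
  exists (fun n => iter n Bellman_argmax v); split=> // n.
  exact: Bellman_step_argmax.
move=> u _ uB i; exists 1%N, 2%N; split=> //.
have := Bellman_step2_decrease i (uB 0%N) (uB 1%N); lra.
Qed.

End BellmanOperator.

Section PolicyMatrices.
Variables (R : realFieldType) (M : nat).
Implicit Types (w z : 'M[R]_M) (psi : 'I_M -> bool).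

Lemma Psi_mulmx_entry n psi (X : 'M[R]_(M, n)) i b :
  (Psi R psi *m X) i b = (psi i)%:R * X i b.
Proof. by rewrite /Psi mul_diag_mx !mxE. Qed.

Lemma subPsi_mulmx_entry n psi (X : 'M[R]_(M, n)) i b :
  ((1%:M - Psi R psi) *m X) i b = (1 - (psi i)%:R) * X i b.
Proof. by rewrite mulmxBl mul1mx 2!mxE Psi_mulmx_entry; ring. Qed.

Lemma Fval_at0 rho delta c k w z psi i :
  Fval rho delta c k w z psi 0 i 0 =
  if psi i then delta * k i (row i z) else c i (row i w).
Proof.
rewrite /Fval mulmx0 oppr0 add0r mxE subPsi_mulmx_entry [X in _ + X]mxE.
by rewrite Psi_mulmx_entry !mxE; case: (psi i) => /=; ring.
Qed.

Lemma Amx_row_stop rho delta w z psi r :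
  psi r -> row r z = delta_mx 0 r -> row r (Amx rho delta w z psi) = 0.
Proof.
move=> psi_r zr; apply/rowP => b.
have zrb : z r b = (b == r)%:R by move: zr => /rowP/(_ b); rewrite !mxE.
rewrite mxE mxE subPsi_mulmx_entry [X in _ + X]mxE Psi_mulmx_entry psi_r.
by rewrite /Bmx !mxE zrb eq_sym subrr /=; ring.
Qed.

Lemma det_row_eq0 (A : 'M[R]_M) r : row r A = 0 -> \det A = 0.
Proof.
move=> Ar; rewrite (expand_det_row _ r) big1 // => j _.
by have /rowP/(_ j) := Ar; rewrite !mxE => ->; rewrite mul0r.
Qed.

Lemma exists_admissible_stop_at (W : 'I_M -> 'rV[R]_M -> Prop)
    (D : 'I_M -> bool -> Prop) r :
  (forall i, exists v, W i v) -> (forall i, exists b, D i b) -> D r true ->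
  exists w psi, admissible W (@Zbasis R M) D w 1%:M psi /\ psi r.
Proof.
move=> /fin_all_exists [wr Wwr] /fin_all_exists [psi Dpsi] Dr.
exists (\matrix_i wr i), (fun i => if i == r then true else psi i).
split; last by rewrite eqxx.
move=> i; rewrite rowK row1; split; [exact: Wwr | split; first by exists i].
by case: eqP => [-> | _].
Qed.

End PolicyMatrices.

Lemma PI_choice_at0_stops (R : realFieldType) (M : nat) (rho C : R) W D c
    (r : 'I_M) w1 z1 psi1 :
  (forall i, exists w, W i w) -> (forall i, exists b, D i b) ->
  D r true -> (forall w, W r w -> c r w < - C) ->
  PI_choice rho 1 W (@Zbasis R M) D c (kdist C) 0 w1 z1 psi1 ->
  row r z1 = delta_mx 0 r /\ psi1 r.
Proof.
move=> Wne Dne Dr c_lt [adm1 max1].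
have [w [psi [adm psi_r]]] := exists_admissible_stop_at Wne Dne Dr.
have := max1 _ _ _ adm r; rewrite !Fval_at0 psi_r row1 kdist_delta state_distxx.
have [Wr1 [[j z1r] _]] := adm1 r.
case: (psi1 r) => [|c_ge]; last by exfalso; have := c_lt _ Wr1; lra.
rewrite z1r kdist_delta !mul1r => dist_le.
by have -> : j = r by apply/esym/state_dist_le0; lra.
Qed.

Theorem mainTheorem9 (R : realFieldType) (M : nat) (rho C : R)
  (W : 'I_M -> 'rV[R]_M -> Prop) (D : 'I_M -> bool -> Prop)
  (c : 'I_M -> 'rV[R]_M -> R) :
  0 < rho -> 0 < C ->
  (forall i, exists w, W i w) ->
  (forall i w, W i w -> prob_vec w) ->
  (forall i, exists b, D i b) ->
  H4 rho 1 W (@Zbasis R M) D c (kdist C) /\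
  (forall r : 'I_M, D r true -> (forall w, W r w -> c r w < - C) ->
    forall (w1 z1 : 'M[R]_M) (psi1 : 'I_M -> bool),
      PI_choice rho 1 W (@Zbasis R M) D c (kdist C) 0 w1 z1 psi1 ->
      [/\ row r z1 = delta_mx 0 r, psi1 r = true,
          row r (Amx rho 1 w1 z1 psi1) = 0
        & \det (Amx rho 1 w1 z1 psi1) = 0]).
Proof.
move=> _ C_gt0 Wne _ Dne; split; first exact: H4_Zbasis_kdist.
move=> r Dr c_lt w1 z1 psi1 choice1.
have [z1r psi1r] := PI_choice_at0_stops Wne Dne Dr c_lt choice1.
have A1r := Amx_row_stop rho 1 w1 psi1r z1r.
by split=> //; exact: det_row_eq0 A1r.
Qed.
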